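(* Let $f:[0,\infty)\to[0,\infty)$ be continuously differentiable with $f>0$ on $[t_0,\infty)$ for some $t_0\ge0$ and $f\in C^2([t_0,\infty))$, let $g=\log f$ on $[t_0,\infty)$, and assume condition (H1) of the context with $q>1$ (and corresponding $p$). Let $(s_n),(t_n)\subset(0,\infty)$ and $x\in[0,1]$ satisfy $s_n<t_n$ for all $n$, $s_n\to\infty$ and $s_n/t_n\to x$. Then $$\lim_{n\to\infty}\frac{g(s_n)}{g(t_n)}=x^p=\lim_{n\to\infty}\left(\frac{g'(s_n)}{g'(t_n)}\right)^q.$$
   Context: Condition (H1): (i) $g'(t)>0$ and $g''(t)>0$ for all $t\ge t_0$, and there is a pair $(q,p)$ with either $q=1$ and $p\in(0,\infty]$, or $q\in(1,\infty)$ and $p\in(0,\infty)$, such that $\lim_{t\to\infty}\frac{g'(t)^2}{g(t)g''(t)}=q$ and $\lim_{t\to\infty}\frac{tg'(t)}{g(t)}=p$; (ii) if $q=1$, then $tg'(t)/g(t)$ is nondecreasing on $[t_0,\infty)$ and there exist $k\in\mathbb{N}$ and $\hat g\in C^2([t_0,\infty))$ with $f=\exp_k\circ\hat g$ and $\hat g'/\hat g$ nonincreasing on $[t_0,\infty)$. *)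

From Stdlib Require Import Reals Lra.
From Coquelicot Require Import Coquelicot.
Open Scope R_scope.

Definition deriv_from (h h' : R -> R) (a : R) : Prop :=
  (forall t, a < t -> is_derive h t (h' t)) /\
  filterlim (fun u => (h u - h a) / (u - a)) (at_right a) (locally (h' a)).

Definition cont_from (h : R -> R) (a : R) : Prop :=
  (forall t, a < t -> continuous h t) /\
  filterlim h (at_right a) (locally (h a)).

(* Real power x^y with the convention 0^y = 0 for y <> 0 and 0^0 = 1;
   for x > 0 it is Stdlib's Rpower x y = exp (y ln x). *)
Definition rpow (x y : R) : R :=
  if Req_EM_T x 0 then (if Req_EM_T y 0 then 1 else 0) else Rpower x y.

(* Write g = ln f.  By the Cauchy mean value theorem,
   (ln g(t_n) - ln g(s_n)) / (ln t_n - ln s_n) is a value of u g'(u) / g(u) at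
   some u >= s_n, so it tends to p and ln g(s_n) - ln g(t_n) = (p + o(1)) ln (s_n/t_n)
   tends to ln (x^p) (to -oo when x = 0).  Likewise
   (ln g'(t_n) - ln g'(s_n)) / (ln g(t_n) - ln g(s_n)) is a value of g g'' / g'^2,
   so it tends to 1/q and q ln (g'(s_n)/g'(t_n)) has the same limit as
   ln g(s_n) - ln g(t_n).  Exponentiating gives both limits. *)

From Stdlib Require Import Reals Lra.
From Coquelicot Require Import Coquelicot.
Open Scope R_scope.

Lemma cauchy_mvt (F G F' G' : R -> R) (a b : R) : a < b ->
  (forall u, a <= u <= b -> is_derive F u (F' u)) ->
  (forall u, a <= u <= b -> is_derive G u (G' u)) ->
  exists c, a <= c <= b /\ (F b - F a) * G' c = (G b - G a) * F' c.
Proof.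
intros Hab HF HG.
set (h := fun u => (F b - F a) * G u - (G b - G a) * F u).
set (h' := fun u => (F b - F a) * G' u - (G b - G a) * F' u).
assert (Hh : forall u, a <= u <= b -> is_derive h u (h' u)).
{ intros u Hu; apply (is_derive_minus (fun u => (F b - F a) * G u)
    (fun u => (G b - G a) * F u)); apply is_derive_scal; auto. }
destruct (MVT_gen h a b h') as [c [Hc Hhc]];
  rewrite ?Rmin_left, ?Rmax_right in * by lra.
- intros u Hu; apply Hh; lra.
- intros u Hu; apply continuity_pt_filterlim, (ex_derive_continuous h).
  eexists; apply Hh; exact Hu.
- exists c; split; [exact Hc|].
  assert (Hh'c : h' c * (b - a) = 0) by (unfold h, h' in *; lra).
  apply Rmult_integral in Hh'c as [Hh'c | Hba]; unfold h' in *; lra.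
Qed.

Lemma increasing_of_derive_pos (G G' : R -> R) (a b : R) : a < b ->
  (forall u, a <= u <= b -> is_derive G u (G' u)) ->
  (forall u, a <= u <= b -> 0 < G' u) -> G a < G b.
Proof.
intros Hab HG HG'.
destruct (cauchy_mvt (fun u => u) G (fun _ => 1) G' a b) as [c [Hc Hmvt]];
  auto using is_derive_id.
specialize (HG' c Hc); nra.
Qed.

Lemma cauchy_quotient_mean_value (F G F' G' h : R -> R) (a b : R) : a < b ->
  (forall u, a <= u <= b -> is_derive F u (F' u)) ->
  (forall u, a <= u <= b -> is_derive G u (G' u)) ->
  (forall u, a <= u <= b -> 0 < G' u) ->
  (forall u, a <= u <= b -> F' u = h u * G' u) ->
  exists c, a <= c /\ (F b - F a) / (G b - G a) = h c.
Proof.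
intros Hab HF HG HG' Hh.
pose proof (increasing_of_derive_pos G G' a b Hab HG HG') as HGab.
destruct (cauchy_mvt F G F' G' a b Hab HF HG) as [c [Hc Hmvt]].
exists c; split; [apply Hc|].
rewrite Hh in Hmvt by exact Hc.
specialize (HG' c Hc).
assert (Hdiff : F b - F a = h c * (G b - G a)).
{ apply (Rmult_eq_reg_r (G' c)); lra. }
rewrite Hdiff; field; lra.
Qed.

Lemma is_lim_seq_values_beyond (h : R -> R) (l : Rbar) (s v : nat -> R) :
  is_lim h p_infty l -> is_lim_seq s p_infty ->
  eventually (fun n => exists c, s n <= c /\ v n = h c) ->
  is_lim_seq v l.
Proof.
intros Hh Hs Hv P HP.
destruct (Hh P HP) as [M HM].
assert (Hs_M : eventually (fun n => M < s n)) by (apply Hs; exists M; auto).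
unfold filtermap; eapply filter_imp; [|exact (filter_and _ _ Hv Hs_M)].
intros n [[c [Hc ->]] Hsn]; apply HM; lra.
Qed.

Lemma is_lim_seq_cauchy_quotient (F G F' G' h : R -> R) (N : R) (l : Rbar)
    (s t : nat -> R) :
  (forall u, N <= u -> is_derive F u (F' u)) ->
  (forall u, N <= u -> is_derive G u (G' u)) ->
  (forall u, N <= u -> 0 < G' u) ->
  (forall u, N <= u -> F' u = h u * G' u) ->
  is_lim h p_infty l -> is_lim_seq s p_infty -> (forall n, s n < t n) ->
  is_lim_seq (fun n => (F (t n) - F (s n)) / (G (t n) - G (s n))) l.
Proof.
intros HF HG HG' Hh Hlim Hs Hst.
apply (is_lim_seq_values_beyond h l s _ Hlim Hs).
assert (Hs_N : eventually (fun n => N < s n)) by (apply Hs; exists N; auto).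
eapply filter_imp; [|exact Hs_N].
intros n HNs; apply (cauchy_quotient_mean_value F G F' G' h); auto; intros u Hu;
  [apply HF | apply HG | apply HG' | apply Hh]; lra.
Qed.

Lemma eventually_denominator_pos (a b : R -> R) (N q : R) : 0 < q ->
  (forall u, N <= u -> 0 < a u) ->
  is_lim (fun u => a u / b u) p_infty q ->
  exists M, forall u, M <= u -> 0 < b u.
Proof.
intros Hq Ha Hlim.
apply is_lim_spec in Hlim.
destruct (Hlim (mkposreal q Hq)) as [M HM]; simpl in HM.
exists (Rmax N M + 1); intros u Hu.
pose proof (Rmax_l N M); pose proof (Rmax_r N M).
specialize (HM u ltac:(lra)); specialize (Ha u ltac:(lra)).
apply Rabs_def2 in HM.
destruct (Rtotal_order (b u) 0) as [Hb | [Hb | Hb]]; [| |exact Hb].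
- pose proof (Rinv_lt_0_compat _ Hb); unfold Rdiv in HM; nra.
- rewrite Hb in HM; unfold Rdiv in HM; rewrite Rinv_0 in HM; lra.
Qed.

(* For [p > 0] this is the logarithm of [rpow x p], read as [-oo] at [x = 0]. *)
Definition ln_rpow (x p : R) : Rbar :=
  if Req_EM_T x 0 then m_infty else Finite (p * ln x).

Lemma is_lim_seq_ln_0 (r : nat -> R) : (forall n, 0 < r n) ->
  is_lim_seq r 0 -> is_lim_seq (fun n => ln (r n)) m_infty.
Proof.
intros Hr Hlim; apply is_lim_seq_spec; intros M.
apply is_lim_seq_spec in Hlim.
destruct (Hlim (mkposreal (exp M) (exp_pos M))) as [N HN].
exists N; intros n Hn; specialize (HN n Hn); simpl in HN.
rewrite Rminus_0_r, Rabs_right in HN by (left; apply Hr).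
rewrite <- (ln_exp M); apply ln_increasing; auto.
Qed.

Lemma is_lim_seq_mul_ln (a r : nat -> R) (x p : R) : 0 <= x -> 0 < p ->
  (forall n, 0 < r n) -> is_lim_seq a p -> is_lim_seq r x ->
  is_lim_seq (fun n => a n * ln (r n)) (ln_rpow x p).
Proof.
intros Hx Hp Hr Ha Hrx; unfold ln_rpow.
destruct (Req_EM_T x 0) as [-> | Hx0].
- apply (is_lim_seq_mult _ _ p m_infty); [exact Ha | |].
  + apply is_lim_seq_ln_0; assumption.
  + apply is_Rbar_mult_sym, is_Rbar_mult_m_infty_pos; simpl; lra.
- apply (is_lim_seq_mult' _ _ p (ln x) Ha).
  apply (is_lim_seq_continuous ln r x); [|exact Hrx].
  apply continuity_pt_filterlim, continuous_ln; lra.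
Qed.

Lemma is_lim_seq_exp_ln_rpow (u : nat -> R) (x p : R) : 0 <= x -> 0 < p ->
  is_lim_seq u (ln_rpow x p) -> is_lim_seq (fun n => exp (u n)) (rpow x p).
Proof.
intros Hx Hp; unfold ln_rpow, rpow.
destruct (Req_EM_T x 0) as [-> | Hx0]; intros Hu.
- destruct (Req_EM_T p 0) as [Hp0 | _]; [lra|].
  apply (is_lim_comp_seq exp u m_infty 0 is_lim_exp_m); [|exact Hu].
  exists 0%nat; discriminate.
- apply (is_lim_seq_continuous exp u (p * ln x)); [|exact Hu].
  apply derivable_continuous_pt, derivable_pt_exp.
Qed.

Lemma is_Rbar_mult_1_l (l : Rbar) : is_Rbar_mult 1 l l.
Proof.
destruct l as [y | |].
- unfold is_Rbar_mult; simpl; now rewrite Rmult_1_l.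
- apply is_Rbar_mult_sym, is_Rbar_mult_p_infty_pos; simpl; lra.
- apply is_Rbar_mult_sym, is_Rbar_mult_m_infty_pos; simpl; lra.
Qed.

Lemma is_derive_ln_comp (h : R -> R) (u dh : R) : 0 < h u ->
  is_derive h u dh -> is_derive (fun v => ln (h v)) u (dh / h u).
Proof.
intros Hpos Hh; exact (is_derive_comp ln h u _ _ (is_derive_ln _ Hpos) Hh).
Qed.

Section LogRatios.

Variables (g g' g'' : R -> R) (N p q : R) (s t : nat -> R).
Hypothesis N_pos : 0 < N.
Hypothesis g_derive : forall u, N <= u -> is_derive g u (g' u).
Hypothesis g'_derive : forall u, N <= u -> is_derive g' u (g'' u).
Hypothesis g_pos : forall u, N <= u -> 0 < g u.
Hypothesis g'_pos : forall u, N <= u -> 0 < g' u.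
Hypothesis g''_pos : forall u, N <= u -> 0 < g'' u.
Hypothesis p_pos : 0 < p.
Hypothesis q_neq0 : q <> 0.
Hypothesis index_lim : is_lim (fun u => u * g' u / g u) p_infty p.
Hypothesis curvature_lim :
  is_lim (fun u => g' u ^ 2 / (g u * g'' u)) p_infty q.
Hypothesis s_pos : forall n, 0 < s n.
Hypothesis s_lt_t : forall n, s n < t n.
Hypothesis s_lim : is_lim_seq s p_infty.

Lemma ln_g_quotient_lim :
  is_lim_seq (fun n => (ln (g (t n)) - ln (g (s n))) / (ln (t n) - ln (s n))) p.
Proof.
apply (is_lim_seq_cauchy_quotient (fun u => ln (g u)) ln
  (fun u => g' u / g u) Rinv (fun u => u * g' u / g u) N);
  [| | | | exact index_lim | exact s_lim | exact s_lt_t]; intros u Hu.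
- apply is_derive_ln_comp; auto.
- apply is_derive_ln; lra.
- apply Rinv_0_lt_compat; lra.
- pose proof (g_pos u Hu); field; split; lra.
Qed.

Lemma ln_g'_quotient_lim :
  is_lim_seq (fun n => (ln (g' (t n)) - ln (g' (s n))) /
                       (ln (g (t n)) - ln (g (s n)))) (/ q).
Proof.
apply (is_lim_seq_cauchy_quotient (fun u => ln (g' u)) (fun u => ln (g u))
  (fun u => g'' u / g' u) (fun u => g' u / g u)
  (fun u => / (g' u ^ 2 / (g u * g'' u))) N);
  [intros u Hu .. | | exact s_lim | exact s_lt_t].
- apply is_derive_ln_comp; auto.
- apply is_derive_ln_comp; auto.
- apply Rdiv_lt_0_compat; auto.
- pose proof (g_pos u Hu); pose proof (g'_pos u Hu); pose proof (g''_pos u Hu).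
  field; repeat split; lra.
- apply (is_lim_inv _ _ q curvature_lim); intros Hq; injection Hq; exact q_neq0.
Qed.

Lemma ln_g_diff_lim (x : R) : 0 <= x -> is_lim_seq (fun n => s n / t n) x ->
  is_lim_seq (fun n => ln (g (s n)) - ln (g (t n))) (ln_rpow x p).
Proof.
intros Hx Hst.
apply (is_lim_seq_ext (fun n =>
  (ln (g (t n)) - ln (g (s n))) / (ln (t n) - ln (s n)) * ln (s n / t n))).
- intros n; pose proof (s_pos n); pose proof (s_lt_t n).
  pose proof (ln_increasing _ _ (s_pos n) (s_lt_t n)).
  rewrite ln_div by lra; field; lra.
- apply is_lim_seq_mul_ln; auto using ln_g_quotient_lim.
  intros n; pose proof (s_pos n); pose proof (s_lt_t n).
  apply Rdiv_lt_0_compat; lra.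
Qed.

Lemma eventually_N_lt_s : eventually (fun n => N < s n).
Proof. apply s_lim; exists N; auto. Qed.

Lemma g_ratio_lim (x : R) : 0 <= x -> is_lim_seq (fun n => s n / t n) x ->
  is_lim_seq (fun n => g (s n) / g (t n)) (rpow x p).
Proof.
intros Hx Hst.
apply (is_lim_seq_ext_loc (fun n => exp (ln (g (s n)) - ln (g (t n))))).
- eapply filter_imp; [|exact eventually_N_lt_s]; intros n Hn.
  pose proof (s_lt_t n).
  unfold Rminus; rewrite exp_plus, exp_Ropp, !exp_ln by (apply g_pos; lra).
  reflexivity.
- apply is_lim_seq_exp_ln_rpow; auto using ln_g_diff_lim.
Qed.

Lemma g'_ratio_rpow_lim (x : R) : 0 <= x -> is_lim_seq (fun n => s n / t n) x ->
  is_lim_seq (fun n => rpow (g' (s n) / g' (t n)) q) (rpow x p).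
Proof.
intros Hx Hst.
apply (is_lim_seq_ext_loc (fun n =>
  exp (q * ((ln (g' (t n)) - ln (g' (s n))) / (ln (g (t n)) - ln (g (s n))))
         * (ln (g (s n)) - ln (g (t n)))))).
- eapply filter_imp; [|exact eventually_N_lt_s]; intros n Hn.
  pose proof (s_lt_t n).
  assert (Hg_st : g (s n) < g (t n)).
  { apply (increasing_of_derive_pos g g'); auto; intros u Hu;
      [apply g_derive | apply g'_pos]; lra. }
  pose proof (ln_increasing _ _ (g_pos (s n) ltac:(lra)) Hg_st).
  assert (Hratio : 0 < g' (s n) / g' (t n))
    by (apply Rdiv_lt_0_compat; apply g'_pos; lra).
  unfold rpow; destruct (Req_EM_T (g' (s n) / g' (t n)) 0) as [Hzero | _]; [lra|].
  unfold Rpower; f_equal.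
  rewrite ln_div by (apply g'_pos; lra).
  field; lra.
- apply is_lim_seq_exp_ln_rpow; auto.
  apply (is_lim_seq_mult _ _ 1 (ln_rpow x p));
    auto using ln_g_diff_lim, is_Rbar_mult_1_l.
  pose proof (is_lim_seq_scal_l _ q _ ln_g'_quotient_lim) as Hlim; simpl in Hlim.
  rewrite Rinv_r in Hlim by exact q_neq0; exact Hlim.
Qed.

End LogRatios.

Theorem lemma2p8 (f f' f'' g' g'' : R -> R) (t0 q p x : R) (s t : nat -> R) :
  0 <= t0 ->
  (* f : [0,oo) -> [0,oo), continuously differentiable on [0,oo) *)
  (forall u, 0 <= u -> 0 <= f u) ->
  deriv_from f f' 0 -> cont_from f' 0 ->
  (* f > 0 on [t0,oo) and f in C^2([t0,oo)) *)
  (forall u, t0 <= u -> 0 < f u) ->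
  deriv_from f' f'' t0 -> cont_from f'' t0 ->
  (* g = log f on [t0,oo), with derivatives g', g'' there *)
  deriv_from (fun u => ln (f u)) g' t0 ->
  deriv_from g' g'' t0 ->
  (* condition (H1) with q > 1 and p in (0,oo) *)
  (forall u, t0 <= u -> 0 < g' u /\ 0 < g'' u) ->
  1 < q -> 0 < p ->
  is_lim (fun u => (g' u) ^ 2 / (ln (f u) * g'' u)) p_infty (Finite q) ->
  is_lim (fun u => u * g' u / ln (f u)) p_infty (Finite p) ->
  (* the sequences *)
  (forall n, 0 < s n) -> (forall n, 0 < t n) -> (forall n, s n < t n) ->
  0 <= x <= 1 ->
  is_lim_seq s p_infty ->
  is_lim_seq (fun n => s n / t n) (Finite x) ->
  is_lim_seq (fun n => ln (f (s n)) / ln (f (t n))) (Finite (rpow x p)) /\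
  is_lim_seq (fun n => rpow (g' (s n) / g' (t n)) q) (Finite (rpow x p)).
Proof.
intros Ht0 _ _ _ _ _ _ [g_derive _] [g'_derive _] g'_g''_pos Hq Hp curvature_lim
  index_lim s_pos _ s_lt_t [Hx _] s_lim Hst.
destruct (eventually_denominator_pos (fun u => g' u ^ 2)
  (fun u => ln (f u) * g'' u) t0 q) as [M HM]; [lra | | exact curvature_lim |].
{ intros u Hu; apply pow_lt, g'_g''_pos, Hu. }
set (N := Rmax t0 M + 1).
assert (HN : forall u, N <= u -> t0 < u /\ M <= u).
{ intros u Hu; pose proof (Rmax_l t0 M); pose proof (Rmax_r t0 M); unfold N in Hu; lra. }
assert (N_pos : 0 < N) by (destruct (HN N (Rle_refl N)); lra).
assert (g_pos : forall u, N <= u -> 0 < ln (f u)).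
{ intros u Hu; destruct (HN u Hu) as [Ht0u HMu].
  specialize (HM u HMu); destruct (g'_g''_pos u (Rlt_le _ _ Ht0u)); nra. }
split.
- apply (g_ratio_lim (fun u => ln (f u)) g' N); auto.
  intros u Hu; apply g_derive, HN, Hu.
- apply (g'_ratio_rpow_lim (fun u => ln (f u)) g' g'' N); auto; try lra;
    intros u Hu; destruct (HN u Hu) as [Ht0u _];
    first [apply g_derive | apply g'_derive | apply g'_g''_pos]; lra.
Qed.
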